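(* Let $n,p$ be positive integers and $x_1,\dots,x_n\in\mathbb R^p$. Define $$C_{p,n}(x_1;x_2,\dots,x_n)=\begin{cases}\sup_{a\in(0,\infty)} x_1^T\,(x_1x_1^T+aI_p)^{-2}x_1, & n=1,\\[2pt] \sup_{a\in(0,\infty)^n} x_1^T\Big(x_1x_1^T+\sum_{i=2}^n a_ix_ix_i^T+a_1I_p\Big)^{-2}x_1, & n\ge2.\end{cases}$$ Then $C_{p,n}(x_1;x_2,\dots,x_n)<\infty$.
   Context: $I_p$ is the $p\times p$ identity matrix and $a=(a_1,\dots,a_n)$. *)

From mathcomp Require Import all_boot all_order all_algebra.
Set Implicit Arguments. Unset Strict Implicit. Unset Printing Implicit Defensive.
Import Order.TTheory GRing.Theory Num.Theory.
Local Open Scope ring_scope.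

(* The matrix  x_1 x_1^T + sum_{i>=2} a_i x_i x_i^T + a_1 I_p  (indices shifted to 0-based:
   i0 = index of x_1).  For n = 1 the sum is empty, giving x_1 x_1^T + a_1 I_p. *)
Definition Cmat (R : realFieldType) (p n : nat) (i0 : 'I_n)
  (x : 'I_n -> 'cV[R]_p) (a : 'I_n -> R) : 'M[R]_p :=
  x i0 *m (x i0)^T + \sum_(i < n | i != i0) a i *: (x i *m (x i)^T) + a i0 *: 1%:M.

Definition Cobj (R : realFieldType) (p n : nat) (i0 : 'I_n)
  (x : 'I_n -> 'cV[R]_p) (a : 'I_n -> R) : R :=
  ((x i0)^T *m (invmx (Cmat i0 x a) ^+ 2) *m x i0) ord0 ord0.

From mathcomp Require Import reals.
From mathcomp Require Import all_boot all_order all_algebra.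
From mathcomp Require Import ring lra.
Set Implicit Arguments. Unset Strict Implicit. Unset Printing Implicit Defensive.
Import Order.TTheory GRing.Theory Num.Theory.
Local Open Scope ring_scope.

(* With y := (Cmat a)^-1 x_1, the objective is |y|^2, and y minimizes the
   ridge-regression energy  sum_i b_i (x_i.z - c_i)^2 + a_1 |z|^2  with b_1 = 1,
   b_i = a_i for i >= 2 and target c = (1, 0, ..., 0).  It therefore suffices to
   show that ridge minimizers satisfy |y|^2 <= C |c|^2 with C depending only on
   the vectors x_i, uniformly in the weights b >= 0 and in e > 0.  This is done
   by induction on the number of vectors.  Let b_j be the largest weight.  If
   b_j <= e, comparing with z = 0 gives e |y|^2 <= b_j |c|^2.  Otherwise the
   same comparison bounds the coordinate x_j.y by 2|c|, and the component of y
   orthogonal to x_j minimizes the ridge energy of the other vectors projected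
   onto the orthogonal complement of x_j, with targets shifted by a multiple of
   x_j.y; the induction hypothesis bounds it. *)

Section Dot.
Variables (R : realFieldType) (p : nat).
Implicit Types (u v w z : 'cV[R]_p) (s : R).

Definition dot u w : R := \sum_k u k ord0 * w k ord0.

Lemma dotC u w : dot u w = dot w u.
Proof. by apply: eq_bigr => k _; rewrite mulrC. Qed.

Lemma dotDl u v w : dot (u + v) w = dot u w + dot v w.
Proof. by rewrite /dot -big_split; apply: eq_bigr => k _; rewrite mxE mulrDl. Qed.

Lemma dotBl u v w : dot (u - v) w = dot u w - dot v w.
Proof. by rewrite /dot -sumrB; apply: eq_bigr => k _; rewrite !mxE mulrBl. Qed.

Lemma dotZl s u w : dot (s *: u) w = s * dot u w.
Proof. by rewrite /dot mulr_sumr; apply: eq_bigr => k _; rewrite mxE mulrA. Qed.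

Lemma dotDr u v w : dot w (u + v) = dot w u + dot w v.
Proof. by rewrite !(dotC w) dotDl. Qed.

Lemma dotBr u v w : dot w (u - v) = dot w u - dot w v.
Proof. by rewrite !(dotC w) dotBl. Qed.

Lemma dotZr s u w : dot w (s *: u) = s * dot w u.
Proof. by rewrite !(dotC w) dotZl. Qed.

Lemma dot0r w : dot w 0 = 0.
Proof. by rewrite /dot big1 // => k _; rewrite mxE mulr0. Qed.

Lemma dot0l w : dot 0 w = 0.
Proof. by rewrite dotC dot0r. Qed.

Lemma dot_sumr (I : finType) (P : pred I) (F : I -> 'cV[R]_p) z :
  dot z (\sum_(i | P i) F i) = \sum_(i | P i) dot z (F i).
Proof. by elim/big_rec2: _ => [|i s1 s2 _ <-]; [exact: dot0r | rewrite dotDr]. Qed.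

Lemma dotvv_ge0 u : 0 <= dot u u.
Proof. by apply: sumr_ge0 => k _; rewrite -expr2 sqr_ge0. Qed.

Lemma dotvv_eq0 u : dot u u = 0 -> u = 0.
Proof.
move=> u0; apply/matrixP => k l; rewrite (ord1 l) mxE.
have /eqP : u k ord0 * u k ord0 = 0.
  by apply: (psumr_eq0P _ u0) => // i _; rewrite -expr2 sqr_ge0.
by rewrite mulf_eq0 orbb => /eqP.
Qed.

Lemma trmx_mul_dot u w : u^T *m w = (dot u w)%:M.
Proof.
apply/matrixP => i k; rewrite (ord1 i) (ord1 k) !mxE eqxx mulr1n.
by apply: eq_bigr => l _; rewrite mxE.
Qed.

Lemma dotE u w : dot u w = (u^T *m w) ord0 ord0.
Proof. by rewrite trmx_mul_dot mxE eqxx mulr1n. Qed.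

Lemma mul_outer_dot u w : (u *m u^T) *m w = dot u w *: u.
Proof. by rewrite -mulmxA trmx_mul_dot mul_mx_scalar. Qed.

Lemma dot_orthD s v w :
  dot v w = 0 -> dot (s *: v + w) (s *: v + w) = s ^+ 2 * dot v v + dot w w.
Proof. by move=> vw0; rewrite !dotDl !dotDr !dotZl !dotZr (dotC w v) vw0; ring. Qed.

End Dot.

Section OrthogonalProjection.
Variables (R : realFieldType) (p : nat).
Implicit Types (f u w z : 'cV[R]_p).

(* The pseudo-inverse of the row [f^T]; it is [0] when [f = 0]. *)
Definition vpinv f : 'cV[R]_p := (dot f f)^-1 *: f.

Definition orthproj f z : 'cV[R]_p := z - dot f z *: vpinv f.

Lemma dot_vpinv_scale f z : dot f z * dot f (vpinv f) = dot f z.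
Proof.
have [/dotvv_eq0 ->|f0] := eqVneq (dot f f) 0; first by rewrite dot0l mul0r.
by rewrite dotZr mulVf // mulr1.
Qed.

Lemma orthproj_decomp f z : z = dot f z *: vpinv f + orthproj f z.
Proof. by rewrite /orthproj addrC subrK. Qed.

Lemma dot_orthproj f z : dot f (orthproj f z) = 0.
Proof. by rewrite /orthproj dotBr dotZr dot_vpinv_scale subrr. Qed.

Lemma dot_vpinv_orthproj f z : dot (vpinv f) (orthproj f z) = 0.
Proof. by rewrite dotZl dot_orthproj mulr0. Qed.

Lemma dot_orthprojl f z w : dot f w = 0 -> dot (orthproj f z) w = dot z w.
Proof. by move=> fw0; rewrite /orthproj dotBl dotZl dotC dotZl fw0 !mulr0 subr0. Qed.

Lemma dot_orthprojr f z w : dot f w = 0 -> dot w (orthproj f z) = dot w z.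
Proof. by move=> fw0; rewrite dotC dot_orthprojl // dotC. Qed.

Lemma dot_orthproj_le f z : dot (orthproj f z) (orthproj f z) <= dot z z.
Proof.
rewrite dot_orthprojr ?dot_orthproj // {1}/orthproj dotBl dotZl gerBl.
by rewrite dotZl mulrCA mulr_ge0 ?invr_ge0 ?dotvv_ge0 // -expr2 sqr_ge0.
Qed.

End OrthogonalProjection.

Lemma sqrrD_le (R : realFieldType) (s t : R) : (s + t) ^+ 2 <= 2 * s ^+ 2 + 2 * t ^+ 2.
Proof. have := sqr_ge0 (s - t); nra. Qed.

Lemma sum_sqr_subr_le (R : realFieldType) (I : finType) (s t : I -> R) :
  \sum_i (s i - t i) ^+ 2 <= 2 * \sum_i s i ^+ 2 + 2 * \sum_i t i ^+ 2.
Proof.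
rewrite !mulr_sumr -big_split /=; apply: ler_sum => i _.
by have := sqrrD_le (s i) (- t i); rewrite sqrrN.
Qed.

Lemma sqr_le_sum (R : realFieldType) (I : finType) (c : I -> R) j :
  c j ^+ 2 <= \sum_i c i ^+ 2.
Proof. by rewrite (bigD1 j) //= lerDl; apply: sumr_ge0 => i _; exact: sqr_ge0. Qed.

Lemma sum_sqr_lift_le (R : realFieldType) (m : nat) (c : 'I_m.+1 -> R) (j : 'I_m.+1) :
  \sum_(i < m) c (lift j i) ^+ 2 <= \sum_i c i ^+ 2.
Proof. by rewrite [X in _ <= X](bigD1_ord j) //= lerDr; exact: sqr_ge0. Qed.

Section RidgeEnergy.
Variables (R : realFieldType) (p m : nat).
Variables (f : 'I_m -> 'cV[R]_p) (b c : 'I_m -> R) (e : R).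

Definition ridge_energy (z : 'cV[R]_p) : R :=
  \sum_i b i * (dot (f i) z - c i) ^+ 2 + e * dot z z.

Definition ridge_min (y : 'cV[R]_p) := forall z, ridge_energy y <= ridge_energy z.

Lemma ridge_energy0 : ridge_energy 0 = \sum_i b i * c i ^+ 2.
Proof.
rewrite /ridge_energy dot0r mulr0 addr0.
by apply: eq_bigr => i _; rewrite dot0r sub0r sqrrN.
Qed.

Lemma ridge_energy_ge_reg z :
  (forall i, 0 <= b i) -> e * dot z z <= ridge_energy z.
Proof.
move=> b_ge0; rewrite lerDr; apply: sumr_ge0 => i _.
by apply: mulr_ge0 => //; exact: sqr_ge0.
Qed.

Lemma ridge_energy_ge_term z j :
  (forall i, 0 <= b i) -> 0 <= e -> b j * (dot (f j) z - c j) ^+ 2 <= ridge_energy z.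
Proof.
move=> b_ge0 e_ge0; rewrite /ridge_energy (bigD1 j) //= -addrA lerDl.
apply: addr_ge0; last by apply: mulr_ge0 => //; exact: dotvv_ge0.
by apply: sumr_ge0 => i _; apply: mulr_ge0 => //; exact: sqr_ge0.
Qed.

Lemma ridge_energyD y d :
  ridge_energy (y + d) = ridge_energy y
    + 2 * (\sum_i b i * ((dot (f i) y - c i) * dot (f i) d) + e * dot y d)
    + (\sum_i b i * dot (f i) d ^+ 2 + e * dot d d).
Proof.
rewrite /ridge_energy !dotDl !dotDr (dotC d y).
under eq_bigr => i _ do rewrite dotDr.
have -> : \sum_i b i * (dot (f i) y + dot (f i) d - c i) ^+ 2 =
    \sum_i b i * (dot (f i) y - c i) ^+ 2
    + 2 * \sum_i b i * ((dot (f i) y - c i) * dot (f i) d)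
    + \sum_i b i * dot (f i) d ^+ 2.
  by rewrite mulr_sumr -!big_split; apply: eq_bigr => i _ /=; ring.
ring.
Qed.

Lemma ridge_min_of_normal y :
  (forall i, 0 <= b i) -> 0 <= e ->
  (forall z, \sum_i b i * (dot (f i) y * dot (f i) z) + e * dot y z
             = \sum_i b i * (c i * dot (f i) z)) ->
  ridge_min y.
Proof.
move=> b_ge0 e_ge0 normal z; rewrite -(subrK y z) (addrC _ y) ridge_energyD.
have -> : \sum_i b i * ((dot (f i) y - c i) * dot (f i) (z - y)) + e * dot y (z - y) = 0.
  rewrite (eq_bigr (fun i => b i * (dot (f i) y * dot (f i) (z - y))
                             - b i * (c i * dot (f i) (z - y)))).
    by rewrite sumrB addrAC normal subrr.
  by move=> i _; rewrite mulrBl mulrBr.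
rewrite mulr0 addr0 lerDl; apply: addr_ge0; last by apply: mulr_ge0 => //; exact: dotvv_ge0.
by apply: sumr_ge0 => i _; apply: mulr_ge0 => //; exact: sqr_ge0.
Qed.

Lemma ridge_min_energy_le y B :
  ridge_min y -> (forall i, b i <= B) -> ridge_energy y <= B * \sum_i c i ^+ 2.
Proof.
move=> ymin b_le; apply: le_trans (ymin 0) _; rewrite ridge_energy0 mulr_sumr.
by apply: ler_sum => i _; apply: ler_wpM2r; [exact: sqr_ge0 | exact: b_le].
Qed.

Lemma ridge_min_reg_le y B :
  (forall i, 0 <= b i) -> ridge_min y -> (forall i, b i <= B) ->
  e * dot y y <= B * \sum_i c i ^+ 2.
Proof.
move=> b_ge0 ymin b_le.
exact: le_trans (ridge_energy_ge_reg y b_ge0) (ridge_min_energy_le ymin b_le).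
Qed.

Lemma ridge_energy_orthproj_le (g : 'cV[R]_p) z :
  (forall i, dot g (f i) = 0) -> 0 <= e ->
  ridge_energy (orthproj g z) <= ridge_energy z.
Proof.
move=> gf0 e_ge0; apply: lerD; last by rewrite ler_wpM2l ?dot_orthproj_le.
by apply: ler_sum => i _; rewrite dotC dot_orthprojl // dotC.
Qed.

End RidgeEnergy.

Definition ridge_norm_bound (R : realFieldType) (p m : nat) (f : 'I_m -> 'cV[R]_p) (C : R) :=
  forall b c e y, (forall i, 0 <= b i) -> 0 < e -> ridge_min f b c e y ->
    dot y y <= C * \sum_i c i ^+ 2.

Section RidgeSplit.
Variables (R : realFieldType) (p m : nat) (f : 'I_m.+1 -> 'cV[R]_p) (j : 'I_m.+1).
Variables (b c : 'I_m.+1 -> R) (e : R).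
Hypothesis b_ge0 : forall i, 0 <= b i.

Let u := vpinv (f j).
Let fp (i : 'I_m) := orthproj (f j) (f (lift j i)).
Let bp (i : 'I_m) := b (lift j i).
Let cp s (i : 'I_m) := c (lift j i) - s * dot (f (lift j i)) u.

Lemma ridge_energy_split s z0 :
  dot (f j) z0 = 0 -> s * dot (f j) u = s ->
  ridge_energy f b c e (s *: u + z0) =
    b j * (s - c j) ^+ 2 + ridge_energy fp bp (cp s) e z0 + e * (s ^+ 2 * dot u u).
Proof.
move=> fz0 su; have uz0 : dot u z0 = 0 by rewrite dotZl fz0 mulr0.
rewrite /ridge_energy (bigD1_ord j) //= dotDr dotZr su fz0 addr0 dot_orthD //.
under eq_bigr => i _ do rewrite dotDr dotZr.
under [in RHS]eq_bigr => i _ do rewrite /fp (dot_orthprojl _ fz0).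
rewrite /bp /cp; under [in RHS]eq_bigr => i _ do rewrite opprB addrA (addrC _ (s * _)).
ring.
Qed.

Lemma ridge_min_orthproj y :
  0 <= e -> ridge_min f b c e y ->
  ridge_min fp bp (cp (dot (f j) y)) e (orthproj (f j) y).
Proof.
move=> e_ge0 ymin z; set s := dot (f j) y.
have su : s * dot (f j) u = s := dot_vpinv_scale _ _.
have fp_orth i : dot (f j) (fp i) = 0 by exact: dot_orthproj.
apply: le_trans (ridge_energy_orthproj_le bp (cp s) z fp_orth e_ge0).
have := ymin (s *: u + orthproj (f j) z).
rewrite {1}(orthproj_decomp (f j) y) -/s -/u.
by rewrite !ridge_energy_split ?dot_orthproj // lerD2r lerD2l.
Qed.

Lemma ridge_min_norm_split C y :
  0 <= C -> ridge_norm_bound fp C ->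
  (forall i, b i <= b j) -> 0 < b j -> 0 < e -> ridge_min f b c e y ->
  dot y y <= (4 * dot u u + C * (2 + 8 * \sum_(i < m) dot (f (lift j i)) u ^+ 2))
             * \sum_i c i ^+ 2.
Proof.
move=> C_ge0 fp_bound b_le bj_gt0 e_gt0 ymin.
set s := dot (f j) y; set w := orthproj (f j) y.
set T := \sum_i c i ^+ 2; set G := \sum_(i < m) _.
have G_ge0 : 0 <= G by apply: sumr_ge0 => i _; exact: sqr_ge0.
have u_ge0 := dotvv_ge0 u.
have s_le : s ^+ 2 <= 4 * T.
  have : b j * (s - c j) ^+ 2 <= b j * T.
    apply: le_trans (ridge_min_energy_le ymin b_le).
    exact: ridge_energy_ge_term y j b_ge0 (ltW e_gt0).
  rewrite ler_pM2l // => sc_le.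
  have := sqrrD_le (s - c j) (c j); rewrite subrK.
  have := sqr_le_sum c j; rewrite -/T; lra.
have w_le : dot w w <= C * (2 * T + 2 * s ^+ 2 * G).
  apply: le_trans (fp_bound _ _ _ _ (fun i => b_ge0 _) e_gt0
                     (ridge_min_orthproj (ltW e_gt0) ymin)) _.
  apply: ler_wpM2l => //; apply: le_trans (sum_sqr_subr_le _ _) _.
  under [X in _ + 2 * X]eq_bigr => i _ do rewrite exprMn.
  rewrite -mulr_sumr -/s -/G mulrA lerD // ler_wpM2l //; exact: sum_sqr_lift_le.
have -> : dot y y = s ^+ 2 * dot u u + dot w w.
  by rewrite {1 2}(orthproj_decomp (f j) y) dot_orthD ?dot_vpinv_orthproj.
have : C * (2 * s ^+ 2 * G) <= C * (2 * (4 * T) * G).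
  by apply: ler_wpM2l => //; apply: ler_wpM2r => //; exact: ler_wpM2l.
have : s ^+ 2 * dot u u <= 4 * T * dot u u by exact: ler_wpM2r.
move: w_le; nra.
Qed.

End RidgeSplit.

Lemma ridge_norm_bounded (R : realFieldType) (p m : nat) (f : 'I_m -> 'cV[R]_p) :
  exists2 C, 0 <= C & ridge_norm_bound f C.
Proof.
elim: m f => [|m IH] f.
  exists 0 => // b c e y b_ge0 e_gt0 ymin.
  have b_le (i : 'I_0) : b i <= 0 by case: i.
  have := ridge_min_reg_le b_ge0 ymin b_le.
  by rewrite !mul0r pmulr_rle0.
have /fin_all_exists2 [C C_ge0 C_bound] :=
  fun j : 'I_m.+1 => IH (fun i => orthproj (f j) (f (lift j i))).
pose D j := 4 * dot (vpinv (f j)) (vpinv (f j))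
  + C j * (2 + 8 * \sum_(i < m) dot (f (lift j i)) (vpinv (f j)) ^+ 2).
have D_ge0 j : 0 <= D j.
  apply: addr_ge0; first by rewrite mulr_ge0 ?dotvv_ge0.
  by rewrite mulr_ge0 ?addr_ge0 ?mulr_ge0 //; apply: sumr_ge0 => i _; exact: sqr_ge0.
exists (1 + \sum_j D j) => [|b c e y b_ge0 e_gt0 ymin].
  by rewrite addr_ge0 ?sumr_ge0.
have [j _ b_le] := @arg_maxP _ _ _ ord0 predT b isT.
have {}b_le i : b i <= b j := b_le i isT.
set T := \sum_i c i ^+ 2.
have T_ge0 : 0 <= T by apply: sumr_ge0 => i _; exact: sqr_ge0.
have [bj_le|e_lt] := lerP (b j) e.
  have y_le : dot y y <= T.
    rewrite -(ler_pM2l e_gt0); apply: le_trans (ridge_min_reg_le b_ge0 ymin b_le) _.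
    exact: ler_wpM2r.
  by apply: le_trans y_le _; rewrite ler_peMl // lerDl sumr_ge0.
apply: le_trans (ridge_min_norm_split b_ge0 (C_ge0 j) (C_bound j) b_le
                   (lt_trans e_gt0 e_lt) e_gt0 ymin) _.
by rewrite ler_wpM2r // (bigD1 j) //= addrCA lerDl addr_ge0 ?sumr_ge0.
Qed.

Lemma unitmx_coercive (R : realFieldType) (p : nat) (M : 'M[R]_p) (e : R) :
  0 < e -> (forall z, e * dot z z <= dot z (M *m z)) -> M \in unitmx.
Proof.
move=> e_gt0 coercive; rewrite -unitmx_tr -row_free_unit -kermx_eq0.
apply/rowV0P => r /sub_kermxP rM.
have Mr : M *m r^T = 0 by rewrite -(trmxK M) -trmx_mul rM trmx0.
have := coercive r^T; rewrite Mr dot0r pmulr_rle0 // => r_le0.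
have /dotvv_eq0 r0 : dot r^T r^T = 0 by apply/eqP; rewrite eq_le r_le0 dotvv_ge0.
by rewrite -(trmxK r) r0 trmx0.
Qed.

Section Cmat.
Variables (R : realFieldType) (p n : nat) (i0 : 'I_n) (x : 'I_n -> 'cV[R]_p) (a : 'I_n -> R).

Lemma Cmat_dot z w :
  dot z (Cmat i0 x a *m w) =
  \sum_i (if i == i0 then 1 else a i) * (dot (x i) w * dot (x i) z) + a i0 * dot w z.
Proof.
rewrite /Cmat !mulmxDl mulmx_suml !dotDr mul_outer_dot dotZr dot_sumr.
rewrite -scalemxAl mul1mx dotZr (dotC z w); congr (_ + _).
rewrite [RHS](bigD1 i0) //= eqxx mul1r (dotC z); congr (_ + _).
by apply: eq_bigr => i /negPf ->; rewrite -scalemxAl mul_outer_dot !dotZr (dotC z).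
Qed.

Lemma Cmat_sym : (Cmat i0 x a)^T = Cmat i0 x a.
Proof.
rewrite /Cmat !linearD /= linear_sum /= !linearZ /= tr_scalar_mx trmx_mul trmxK.
by congr (_ + _ + _); apply: eq_bigr => i _; rewrite linearZ /= trmx_mul trmxK.
Qed.

Lemma Cobj_dot :
  Cobj i0 x a = dot (invmx (Cmat i0 x a) *m x i0) (invmx (Cmat i0 x a) *m x i0).
Proof. by rewrite /Cobj dotE trmx_mul trmx_inv Cmat_sym expr2 -mulmxE !mulmxA. Qed.

End Cmat.

Theorem lemma3 (R : realType) (p n : nat) (hp : (0 < p)%N) (hn : (0 < n)%N)
  (x : 'I_n -> 'cV[R]_p) :
  exists B : R, forall a : 'I_n -> R, (forall i, 0 < a i) ->
    Cobj (Ordinal hn) x a <= B.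
Proof.
set i0 := Ordinal hn; have [C _ C_bound] := ridge_norm_bounded x.
exists C => a a_gt0; set M := Cmat i0 x a.
pose b i := if i == i0 then 1 else a i.
pose c i : R := (i == i0)%:R.
have b_ge0 i : 0 <= b i by rewrite /b; case: eqP => // _; exact: ltW.
have e_gt0 : 0 < a i0 := a_gt0 i0.
have M_unit : M \in unitmx.
  apply: (unitmx_coercive e_gt0) => z; rewrite Cmat_dot lerDr.
  by apply: sumr_ge0 => i _; apply: mulr_ge0; [exact: b_ge0 | rewrite -expr2 sqr_ge0].
set y := invmx M *m x i0.
have dot_c z : \sum_i b i * (c i * dot (x i) z) = dot (x i0) z.
  rewrite (bigD1 i0) //= big1 => [|i /negPf ni0]; last by rewrite /c ni0 !mul0r mulr0.
  by rewrite /b /c eqxx !mul1r addr0.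
have ymin : ridge_min x b c (a i0) y.
  apply: ridge_min_of_normal (ltW e_gt0) _ => // z.
  by rewrite dot_c -(Cmat_dot i0 x a z y) mulKVmx // dotC.
have := C_bound b c (a i0) y b_ge0 e_gt0 ymin.
rewrite Cobj_dot -/M -/y (bigD1 i0) //= big1 => [|i /negPf ni0]; last by rewrite /c ni0 expr0n.
by rewrite /c eqxx expr1n addr0 mulr1.
Qed.
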